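(* Let $I:\mathbb{N}\to\mathbb{N}$ be an increasing function. There exists an online minimization problem $P$ with at most $I(n)$ inputs of length $n$ such that some randomized algorithm without advice is $1$-competitive for $P$, while every deterministic $P$-algorithm with advice needs to read at least $\Omega(\log\log I(n))$ bits of advice (on inputs of length $n$) to achieve a constant competitive ratio.
   Context: Online algorithms with advice read bits from an infinite advice tape prepared by an oracle knowing the whole input; advice complexity is the maximum number of bits read on inputs of length at most $n$. A randomized algorithm is a probability distribution over deterministic algorithms. An algorithm $R$ is $c$-competitive if there is a constant $\alpha$ with $\mathbb{E}[R(\sigma)]\leq c\,\mathrm{OPT}(\sigma)+\alpha$ for all inputs $\sigma$. *)

From HB Require Import structures.
From mathcomp Require Import all_boot all_order all_algebra.
From mathcomp Require Import all_classical all_reals all_analysis measurable_realfun.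
Unset Strict Implicit. Unset Printing Implicit Defensive.
Import Order.TTheory GRing.Theory Num.Theory.
Local Open Scope classical_set_scope.
Local Open Scope ring_scope.

(* An online minimization problem: requests of type [req], answers of type
   [ans], a set of admissible inputs (request sequences) and a nonnegative,
   possibly infinite (= infeasible) cost of an answer sequence on an input. *)
Record online_min_problem (R : realType) := OnlineMinProblem {
  req : Type;
  ans : Type;
  is_input : seq req -> Prop;
  cost : seq req -> seq ans -> \bar R;
  cost_ge0 : forall s y, (0 <= cost s y)%E
}.
Arguments req {R} P : rename.
Arguments ans {R} P : rename.
Arguments is_input {R} P s : rename.
Arguments cost {R} P s y : rename.

Definition OPT {R : realType} (P : online_min_problem R) (s : seq (req P)) : \bar R :=
  ereal_inf [set cost P s y | y in [set y : seq (ans P) | size y = size s]].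

(* A deterministic online algorithm: the answer to the last request of a
   prefix, computed from that prefix only. *)
Definition det_alg (X Y : Type) := seq X -> Y.

Definition run {X Y : Type} (A : det_alg X Y) (s : seq X) : seq Y :=
  [seq A (take i.+1 s) | i <- iota 0 (size s)].

Definition tape := nat -> bool.

(* A deterministic online algorithm with advice is given by
   [A phi p]     : answer to the last request of prefix p with tape phi,
   [reads phi p] : number of advice bits (a prefix of the tape) read
                   by the end of processing prefix p.
   Well-formedness: bits are read in order, never "unread", and everything
   done up to prefix p (including how many bits are read) depends only on
   the bits read so far. *)
Definition advice_alg_wf {X Y : Type} (A : tape -> seq X -> Y)
    (reads : tape -> seq X -> nat) : Prop :=
  (forall phi (s : seq X) i, reads phi (take i s) <= reads phi s)%N /\
  (forall phi phi' (p : seq X),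
      (forall k, (k < reads phi p)%N -> phi k = phi' k) ->
      reads phi' p = reads phi p /\ A phi' p = A phi p).

Definition advice_competitive {R : realType} (P : online_min_problem R)
    (A : tape -> seq (req P) -> ans P) (reads : tape -> seq (req P) -> nat)
    (c : R) (b : nat -> nat) : Prop :=
  exists alpha : R, forall s, is_input P s ->
    exists phi : tape,
      (cost P s (run (A phi) s) <= c%:E * OPT P s + alpha%:E)%E /\
      (forall n, (size s <= n)%N -> (reads phi s <= b n)%N).

(* A randomized algorithm: a probability distribution over deterministic
   algorithms, presented as a random variable [Ra] on a probability space. *)
Definition rand_competitive {R : realType} (P : online_min_problem R)
    {d : measure_display} {T : measurableType d} (Pr : probability T R)
    (Ra : T -> det_alg (req P) (ans P)) (c : R) : Prop :=
  (forall s, is_input P s ->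
     measurable_fun setT (fun w => cost P s (run (Ra w) s))) /\
  exists alpha : R, forall s, is_input P s ->
    (\int[Pr]_w cost P s (run (Ra w) s) <= c%:E * OPT P s + alpha%:E)%E.

Definition at_most_inputs {R : realType} (P : online_min_problem R)
    (I : nat -> nat) : Prop :=
  forall n, exists f : 'I_(I n) -> seq (req P),
    forall s, is_input P s -> size s = n -> exists i, f i = s.

From HB Require Import structures.
From mathcomp Require Import all_boot all_order all_algebra.
From mathcomp Require Import all_classical all_reals all_analysis measurable_realfun.
From mathcomp Require Import lra.

Set Implicit Arguments.
Unset Strict Implicit.
Unset Printing Implicit Defensive.
Import Order.TTheory GRing.Theory Num.Theory.
Local Open Scope ring_scope.
Local Open Scope classical_set_scope.

(* Let t be the largest integer with t^(2t) <= I(n).  The inputs of length n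
   are 0, c, 0, ..., 0 with c < I(n), and c names one of the (t^2)^t lists of t
   cells of the grid of [0, 1] of mesh 1/t^2.  Only the first answer is
   charged: t if it lies outside [0, 1] or in one of the listed cells, 0
   otherwise, so OPT = 0 (some cell is free).  A uniformly random point is
   charged with probability at most t/t^2, hence has expected cost at most 1.
   The first request is always 0, so an algorithm reading B advice bits must
   answer it by one of 2^B points fixed before c is known; if 2^B <= t the
   adversary picks c listing cells that cover all of them, and the cost t
   exceeds any additive constant.  Hence t < 2^B, while
   ln ln I(n) <= ln 2 + 2 ln (t + 1) = O(B). *)

Definition trunc_selfpow (m : nat) : nat :=
  \max_(k < m.+1 | (k ^ (2 * k) <= m)%N) k.

Lemma trunc_selfpow_max m k : (k ^ (2 * k) <= m)%N -> (k <= trunc_selfpow m)%N.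
Proof.
move=> km; have k_lt : (k < m.+1)%N.
  rewrite ltnS (leq_trans _ km) //; case: k {km} => // k.
  by rewrite -[X in (X <= _)%N]expn1 leq_pexp2l // muln_gt0.
exact: (leq_bigmax_cond (Ordinal k_lt)).
Qed.

Lemma trunc_selfpowP m : (0 < m)%N ->
  (trunc_selfpow m ^ (2 * trunc_selfpow m) <= m)%N.
Proof.
move=> m_gt0; pose P := [pred k : 'I_m.+1 | (k ^ (2 * k) <= m)%N].
have P_nonempty : (0 < #|P|)%N by apply/card_gt0P; exists ord0; rewrite inE /= expn0.
rewrite /trunc_selfpow; have [k Pk ->] := eq_bigmax_cond (fun k => val k) P_nonempty.
by rewrite inE in Pk.
Qed.

Lemma trunc_selfpow_ltn m :
  (m < (trunc_selfpow m).+1 ^ (2 * (trunc_selfpow m).+1))%N.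
Proof. by rewrite ltnNge; apply/negP => /trunc_selfpow_max; rewrite ltnn. Qed.

Lemma lnln_selfpow_le (R : realType) (m u B : nat) : (0 < u)%N -> (0 < B)%N ->
  (m < u ^ (2 * u))%N -> (u <= 2 ^ B)%N -> (3^-1 : R) * ln (ln m%:R) <= B%:R.
Proof.
move=> u_gt0 B_gt0 m_lt u_le.
have B1 : 1 <= B%:R :> R by rewrite ler1n.
have [lnm_le0|lnm_gt0] := lerP (ln (m%:R : R)) 0.
  by rewrite (ln0 lnm_le0) mulr0; lra.
have m_gt0 : 0 < m%:R :> R.
  by rewrite ltNge; apply/negP => m0; move: lnm_gt0; rewrite ln0 ?ltxx.
have u_gt0' : 0 < u%:R :> R by rewrite ltr0n.
have two_gt0 : (0 : R) < 2 by lra.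
have ln2_le1 : ln (2 : R) <= 1 := le_ln1Dx (lt_trans (ltrN10 R) ltr01).
have ln2_ge0 : 0 <= ln (2 : R) by apply: ln_ge0; lra.
have lnm_le : ln (m%:R : R) <= 2 * u%:R * ln (u%:R : R).
  have -> : 2 * u%:R * ln (u%:R : R) = ln (u%:R ^+ (2 * u)).
    by rewrite lnXn // -[RHS]mulr_natl natrM.
  by rewrite ler_ln ?posrE ?exprn_gt0 // -natrX ler_nat ltnW.
have lnu_lt : ln (u%:R : R) < u%:R := ln_sublinear u_gt0'.
have lnu_leB : ln (u%:R : R) <= B%:R * ln 2.
  by rewrite mulr_natl -lnXn // ler_ln ?posrE ?exprn_gt0 // -natrX ler_nat.
have lnlnm_le : ln (ln (m%:R : R)) <= ln 2 + 2 * ln (u%:R : R).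
  have -> : ln 2 + 2 * ln (u%:R : R) = ln (2 * u%:R ^+ 2).
    by rewrite lnM ?posrE ?exprn_gt0 // lnXn // -[X in _ = _ + X]mulr_natl.
  by rewrite ler_ln ?posrE ?mulr_gt0 ?exprn_gt0 // expr2; nra.
nra.
Qed.

Section unit_cells.
Variables (R : realType) (N : nat).
Hypothesis N_gt0 : (0 < N)%N.

Definition cell (j : nat) : set R := `[j%:R / N%:R, j.+1%:R / N%:R].

Definition cell_index (x : R) : nat := minn (Num.truncn (x * N%:R)) N.-1.

Definition cell_mid (j : nat) : R := (j%:R + 2^-1) / N%:R.

Let N_gt0' : 0 < N%:R :> R. Proof. by rewrite ltr0n. Qed.

Lemma cell_index_lt x : (cell_index x < N)%N.
Proof. by rewrite /cell_index (leq_ltn_trans (geq_minr _ _)) // prednK. Qed.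

Lemma cell_cell_index x : 0 <= x <= 1 -> cell (cell_index x) x.
Proof.
move=> /andP[x_ge0 x_le1].
rewrite /cell /= in_itv /= ler_pdivrMr // ler_pdivlMr //.
have /andP[tr_le tr_gt] := Num.Theory.truncn_itv (mulr_ge0 x_ge0 (ltW N_gt0')).
rewrite /cell_index; case: leqP => [tr_small|tr_big].
  by rewrite tr_le ltW.
rewrite prednK //; apply/andP; split.
  by apply: le_trans tr_le; rewrite ler_nat ltnW.
by rewrite -[X in _ <= X]mul1r ler_wpM2r // ltW.
Qed.

Lemma cell_mid_itv j : (j < N)%N -> 0 <= cell_mid j <= 1.
Proof.
move=> j_lt; have : j.+1%:R <= N%:R :> R by rewrite ler_nat.
rewrite /cell_mid divr_ge0 ?addr_ge0 ?invr_ge0 ?ler0n ?(ltW N_gt0') //=.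
by rewrite ler_pdivrMr // mul1r -addn1 natrD; lra.
Qed.

Lemma cell_mid_notin j0 j : j != j0 -> ~ cell j (cell_mid j0).
Proof.
rewrite /cell /cell_mid /= in_itv /= !ler_pM2r ?invr_gt0 //.
case: ltngtP => // [j_lt|j_gt] _.
  have : j.+1%:R <= j0%:R :> R by rewrite ler_nat.
  by rewrite -addn1 natrD; lra.
have : j0.+1%:R <= j%:R :> R by rewrite ler_nat.
by rewrite -addn1 natrD; lra.
Qed.

End unit_cells.
Arguments cell {R} N j.
Arguments cell_index {R} N x.
Arguments cell_mid {R} N j.

Lemma content_bigsetU_le d (T : ringOfSetsType d) (R : realFieldType)
    (mu : {content set T -> \bar R}) (F : nat -> set T) (e : R) (l : seq nat) :
  (forall j, measurable (F j)) -> (forall j, (mu (F j) <= e%:E)%E) ->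
  (mu (\big[setU/set0]_(j <- l) F j) <= ((size l)%:R * e)%:E)%E.
Proof.
move=> mF muF; elim: l => [|j l IH]; first by rewrite big_nil measure0 mul0r.
rewrite big_cons.
apply: le_trans (measureU2 _ _ _) _ => //; first exact: bigsetU_measurable.
by rewrite /= -addn1 natrD mulrDl mul1r addrC EFinD leeD.
Qed.

Definition unif01 {R : realType} := uniform_prob (@ltr01 R).

Lemma unif01_le_lebesgue (R : realType) (U : set R) : measurable U ->
  (unif01 U <= lebesgue_measure U)%E.
Proof.
move=> mU; rewrite /unif01 /uniform_prob -[X in (_ <= X)%E]mul1e -integral_cst //.
apply: ge0_le_integral => //.
- by move=> x _; rewrite lee_fin uniform_pdf_ge0.
- by apply/measurable_EFinP/measurable_funTS; exact: measurable_uniform_pdf.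
- by move=> x _; rewrite /uniform_pdf lee_fin subr0 invr1; case: ifP.
Qed.

Lemma unif01_notin01 (R : realType) : @unif01 R (~` `[0, 1]) = 0%E.
Proof. by rewrite /unif01 /uniform_prob integral_uniform_pdf setICl integral_set0. Qed.

Lemma unif01_cell (R : realType) N j : (0 < N)%N ->
  (@unif01 R (cell N j) <= (N%:R^-1)%:E)%E.
Proof.
move=> N_gt0; apply: le_trans (unif01_le_lebesgue _) _; first exact: measurable_itv.
rewrite lebesgue_measure_itv /= lte_fin ltr_pM2r ?invr_gt0 ?ltr0n // ltr_nat ltnSn.
by rewrite -EFinD -mulrBl -natrB // subSnn mul1r.
Qed.

Lemma OPT_ge0 (R : realType) (P : online_min_problem R) s : (0 <= OPT P s)%E.
Proof. by apply/ereal_infP => y [z _ <-]; exact: cost_ge0. Qed.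

Definition bits_tape (v : seq bool) : tape := nth false v.

Lemma advice_answer_bits X Y (A : tape -> seq X -> Y)
    (reads : tape -> seq X -> nat) phi p B :
  advice_alg_wf A reads -> (reads phi p <= B)%N ->
  exists v : B.-tuple bool, A phi p = A (bits_tape v) p.
Proof.
move=> [_ wf] reads_le; pose v := [tuple phi i | i < B]; exists v.
have agree k : (k < reads phi p)%N -> phi k = bits_tape v k.
  move=> k_lt; have k_ltB : (k < B)%N := leq_trans k_lt reads_le.
  by rewrite /bits_tape -[k]/(nat_of_ord (Ordinal k_ltB)) nth_mktuple.
by have [_ <-] := wf phi _ p agree.
Qed.

Lemma exists_notin_ltn N (L : seq nat) :
  (size L < N)%N -> exists2 j, (j < N)%N & j \notin L.
Proof.
move=> L_small; have [/allP L_full|] := boolP (all (mem L) (iota 0 N)).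
  have := uniq_leq_size (iota_uniq 0 N) L_full.
  by rewrite size_iota leqNgt L_small.
rewrite -has_predC => /hasP [j]; rewrite mem_iota add0n /= => j_lt j_notin.
by exists j.
Qed.

Section problem.
Variables (R : realType) (I : nat -> nat).

Definition ncells n := trunc_selfpow (I n).
Definition width n := (ncells n ^ 2)%N.

Definition codes n : seq (seq nat) :=
  [seq map val (tval L) | L <- enum {: (ncells n).-tuple 'I_(width n)}].

Definition input n c : seq nat := [:: 0, c & nseq (n - 2) 0]%N.

Definition is_code_input (s : seq nat) : Prop :=
  exists2 c, (c < I (size s))%N & (2 <= size s)%N /\ s = input (size s) c.

Definition forbidden_cells (s : seq nat) : seq nat :=
  nth [::] (codes (size s)) (nth 0%N s 1).

Definition forbidden (s : seq nat) : set R :=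
  ~` `[0, 1] `|` \bigcup_(j in [set` forbidden_cells s]) cell (width (size s)) j.

Definition code_cost (s : seq nat) (y : seq R) : \bar R :=
  ((ncells (size s))%:R * \1_(forbidden s) (head 0 y))%:E.

Lemma code_cost_ge0 s y : (0 <= code_cost s y)%E.
Proof. by rewrite lee_fin mulr_ge0. Qed.

Definition code_problem : online_min_problem R :=
  @OnlineMinProblem R nat R is_code_input code_cost code_cost_ge0.

Lemma code_problem_at_most_inputs : at_most_inputs code_problem I.
Proof.
move=> n; exists (fun c : 'I_(I n) => input n c).
by move=> s [c c_lt [_ s_eq]] <-; exists (Ordinal c_lt); apply/esym.
Qed.

Lemma measurable_forbidden s : measurable (forbidden s).
Proof.
apply: measurableU; first exact: (measurableC (measurable_itv _)).
by rewrite bigcup_seq; apply: bigsetU_measurable => j _; exact: measurable_itv.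
Qed.

Lemma size_forbidden_cells s : (size (forbidden_cells s) <= ncells (size s))%N.
Proof.
rewrite /forbidden_cells; case: (ltnP (nth 0%N s 1) (size (codes (size s)))) => h.
  by have /mapP [L _ ->] := mem_nth [::] h; rewrite size_map size_tuple.
by rewrite nth_default.
Qed.

Lemma unif01_forbidden s : (0 < ncells (size s))%N ->
  (unif01 (forbidden s) <= ((ncells (size s))%:R^-1)%:E)%E.
Proof.
move=> t_gt0; have N_gt0 : (0 < width (size s))%N by rewrite expn_gt0 t_gt0.
rewrite /forbidden bigcup_seq.
apply: le_trans (measureU2 _ _ _) _ => //.
- exact: (measurableC (measurable_itv _)).
- by apply: bigsetU_measurable => j _; exact: measurable_itv.
rewrite [X in (X + _)%E](_ : _ = 0%E) ?add0e; last exact: unif01_notin01.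
have cells_le := content_bigsetU_le (mu := unif01) (F := cell (width (size s)))
  (forbidden_cells s) (fun j => measurable_itv _) (fun j => unif01_cell R j N_gt0).
apply: le_trans cells_le _.
rewrite lee_fin /width natrX expr2 invfM mulrA -[X in _ <= X]mul1r.
rewrite ler_pM2r ?invr_gt0 ?ltr0n // ler_pdivrMr ?ltr0n // mul1r ler_nat.
exact: size_forbidden_cells.
Qed.

Lemma cost_constant_guess s : is_code_input s ->
  (fun w => code_cost s (run (fun=> w) s)) =
  (fun w => ((ncells (size s))%:R * \1_(forbidden s) w)%:E).
Proof.
by move=> [c _ [s_ge2 _]]; apply/funext => w; rewrite /code_cost; case: s s_ge2.
Qed.

Lemma code_problem_rand_competitive :
  rand_competitive code_problem unif01 (fun w _ => w) 1.
Proof.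
split=> [s s_in|]; first rewrite /= cost_constant_guess //.
  apply/measurable_EFinP/measurable_funM; first exact: measurable_cst.
  by apply: measurable_indic; exact: measurable_forbidden.
exists 1 => s s_in; rewrite /= cost_constant_guess //.
under eq_integral do rewrite EFinM.
have mF := measurable_forbidden s.
rewrite ge0_integralZl //; last exact/measurable_EFinP/measurable_indic.
rewrite integral_indic ?setIT //.
apply: (@le_trans _ _ 1%:E); last by rewrite mul1e addeC leeDl // OPT_ge0.
case t_eq: (ncells (size s)) => [|t]; first by rewrite mul0e.
apply: le_trans (lee_wpmul2l _ (unif01_forbidden _)) _; rewrite ?t_eq ?lee_fin //.
by rewrite mulfV.
Qed.

Lemma size_input n c : (2 <= n)%N -> size (input n c) = n.
Proof. by move=> n_ge2; rewrite /= size_nseq -addn2 subnK. Qed.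

Lemma input_forbidden_cells n L : (0 < I n)%N -> (2 <= n)%N ->
    size L = ncells n -> all (fun j => j < width n)%N L ->
  exists2 c, is_code_input (input n c) & forbidden_cells (input n c) = L.
Proof.
move=> In_gt0 n_ge2 sizeL allL.
have valL : map val (pmap insub L : seq 'I_(width n)) = L.
  rewrite (pmap_filter (@insubK _ _ _)) (eq_filter (isSome_insub _)).
  exact/all_filterP.
have size_tau : size (pmap insub L : seq 'I_(width n)) == ncells n.
  by rewrite -(size_map val) valL sizeL.
pose tau := Tuple size_tau.
pose c := index tau (enum {: (ncells n).-tuple 'I_(width n)}).
have c_lt : (c < size (enum {: (ncells n).-tuple 'I_(width n)}))%N.
  by rewrite index_mem mem_enum.
exists c.
  exists c; rewrite size_input //.
  apply: leq_trans c_lt _; rewrite -cardE card_tuple card_ord -expnM.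
  exact: trunc_selfpowP.
by rewrite /forbidden_cells size_input // (nth_map tau) // nth_index ?mem_enum.
Qed.

Lemma code_cost_forbidden s y : forbidden s (head 0 y) ->
  code_cost s y = (ncells (size s))%:R%:E.
Proof. by move=> y_forb; rewrite /code_cost indicE mem_set // mulr1. Qed.

Lemma forbidden_cell_index s x : (0 < width (size s))%N ->
  cell_index (width (size s)) x \in forbidden_cells s -> forbidden s x.
Proof.
move=> N_gt0 x_cell; have [x01|x_out] := boolP (0 <= x <= 1).
  by right; exists (cell_index (width (size s)) x) => //; exact: cell_cell_index.
by left; rewrite /= in_itv /= (negbTE x_out).
Qed.

Lemma cell_mid_not_forbidden s j0 : (j0 < width (size s))%N ->
  j0 \notin forbidden_cells s -> ~ forbidden s (cell_mid (width (size s)) j0).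
Proof.
move=> j0_lt j0_notin; have N_gt0 := leq_ltn_trans (leq0n j0) j0_lt.
case=> [|[j j_in]]; first by apply; rewrite /= in_itv /=; exact: cell_mid_itv.
by apply: cell_mid_notin => //; apply: contraNneq j0_notin => <-.
Qed.

Lemma OPT_code_problem_eq0 s : is_code_input s -> (2 <= ncells (size s))%N ->
  OPT code_problem s = 0%E.
Proof.
move=> [c _ [s_ge2 _]] t_ge2; set N := width (size s).
have [j0 j0_lt j0_notin] : exists2 j0, (j0 < N)%N & j0 \notin forbidden_cells s.
  apply/exists_notin_ltn/(leq_ltn_trans (size_forbidden_cells s)).
  by rewrite /N /width -[X in (X < _)%N]muln1 ltn_mul2l (leq_trans _ t_ge2).
pose y := nseq (size s) (@cell_mid R N j0).
have head_y : head 0 y = cell_mid N j0 by rewrite /y; case: (size s) s_ge2.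
apply/eqP; rewrite eq_le OPT_ge0 andbT; apply: ge_ereal_inf.
exists (code_cost s y); first by exists y => //; exact: size_nseq.
rewrite /code_cost head_y indicE memNset ?mulr0 //.
exact: cell_mid_not_forbidden.
Qed.

Lemma advice_bits_gt_ncells ratio alpha A reads (b : nat -> nat) n :
    advice_alg_wf A reads ->
    (forall s, is_code_input s -> exists phi : tape,
       (code_cost s (run (A phi) s)
          <= ratio%:E * OPT code_problem s + alpha%:E)%E /\
       (forall n, (size s <= n)%N -> (reads phi s <= b n)%N)) ->
    (0 < I n)%N -> (2 <= n)%N -> (2 <= ncells n)%N -> alpha < (ncells n)%:R ->
  (ncells n < 2 ^ b n)%N.
Proof.
move=> wf competitive In_gt0 n_ge2 t_ge2 alpha_lt.
set t := ncells n in t_ge2 alpha_lt *; set N := width n; set B := b n.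
have N_gt0 : (0 < N)%N by rewrite expn_gt0 (leq_trans _ t_ge2).
rewrite ltnNge; apply/negP => t_ge.
pose answers := [seq A (bits_tape (tval v)) [:: 0%N] | v <- enum {: B.-tuple bool}].
have size_answers : size answers = (2 ^ B)%N.
  by rewrite size_map -cardE card_tuple card_bool.
pose L := map (cell_index N) answers ++ nseq (t - 2 ^ B) 0%N.
have sizeL : size L = t by rewrite size_cat size_map size_answers size_nseq subnKC.
have allL : all (fun j => j < N)%N L.
  rewrite all_cat all_nseq /= N_gt0 orbT andbT.
  by apply/allP => _ /mapP [x _ ->]; exact: cell_index_lt.
have [k k_in cellsL] := input_forbidden_cells In_gt0 n_ge2 sizeL allL.
have [phi [cost_le reads_le]] := competitive _ k_in.
have size_s : size (input n k) = n by exact: size_input.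
set s := input n k in k_in cellsL cost_le reads_le size_s.
have first_answer : A phi [:: 0%N] \in answers.
  have reads_first : (reads phi [:: 0%N] <= B)%N.
    by apply: leq_trans (wf.1 phi s 1) (reads_le n _); rewrite size_s.
  have [v ->] := advice_answer_bits wf reads_first.
  by apply: map_f; rewrite mem_enum.
have : forbidden s (head 0 (run (A phi) s)).
  by apply: forbidden_cell_index; rewrite size_s // cellsL mem_cat map_f.
move=> /code_cost_forbidden; move: cost_le => /[swap] ->.
have OPT0 : OPT code_problem s = 0%E.
  by apply: OPT_code_problem_eq0; rewrite ?size_s.
by rewrite OPT0 size_s mule0 add0e lee_fin; lra.
Qed.

End problem.

Theorem theorem18 (R : realType) (I : nat -> nat)
    (I_incr : forall n, (I n < I n.+1)%N) :
  exists P : online_min_problem R,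
    at_most_inputs P I /\
    (exists (d : measure_display) (T : measurableType d) (Pr : probability T R)
            (Ra : T -> det_alg (req P) (ans P)),
        rand_competitive P Pr Ra 1) /\
    (forall (c : R) (A : tape -> seq (req P) -> ans P)
            (reads : tape -> seq (req P) -> nat) (b : nat -> nat),
        advice_alg_wf A reads ->
        advice_competitive P A reads c b ->
        exists (kappa : R) (n0 : nat), 0 < kappa /\
          forall n, (n0 <= n)%N ->
            kappa * ln (ln ((I n)%:R)) <= (b n)%:R).
Proof.
exists (code_problem R I); split; first exact: code_problem_at_most_inputs.
split.
  by exists _, _, unif01, (fun w _ => w); exact: code_problem_rand_competitive.
move=> c A reads b wf [alpha competitive].
have n_le_I n : (n <= I n)%N by elim: n => // n IH; exact: leq_ltn_trans IH (I_incr n).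
pose K := maxn 2 (Num.truncn alpha).+1.
have alpha_lt : alpha < K%:R.
  by apply: lt_le_trans (truncnS_gt alpha) _; rewrite ler_nat leq_maxr.
exists 3^-1, (maxn 2 (K ^ (2 * K))); split=> [|n]; first by rewrite invr_gt0 ltr0n.
rewrite geq_max => /andP[n_ge2 n_ge].
have K_le : (K <= ncells I n)%N := trunc_selfpow_max (leq_trans n_ge (n_le_I n)).
have t_ge2 : (2 <= ncells I n)%N := leq_trans (leq_maxl _ _) K_le.
have In_gt0 : (0 < I n)%N := leq_trans (ltnW n_ge2) (n_le_I n).
have alpha_lt_t : alpha < (ncells I n)%:R.
  by apply: lt_le_trans alpha_lt _; rewrite ler_nat.
have bits_gt := advice_bits_gt_ncells wf competitive In_gt0 n_ge2 t_ge2 alpha_lt_t.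
have b_gt0 : (0 < b n)%N.
  by rewrite lt0n; apply: contraTneq bits_gt => ->; rewrite -leqNgt (ltnW t_ge2).
exact: lnln_selfpow_le b_gt0 (trunc_selfpow_ltn _) bits_gt.
Qed.
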